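(* Let $T$ be a left regular pre-truss and $\mathrm{Q}(T)$ its pre-truss of left fractions. (1) If the heap of $T$ is Abelian, then so is the heap of $\mathrm{Q}(T)$. (2) If $T$ is a near-truss, then $\mathrm{Q}(T)$ is a near-truss. (3) If $T$ is a skew truss, then $\mathrm{Q}(T)$ is a skew truss.
   Context: A heap is a set with a ternary operation $[-,-,-]$ satisfying $[a_1,a_2,[a_3,a_4,a_5]]=[[a_1,a_2,a_3],a_4,a_5]$ and $[a,a,b]=b=[b,a,a]$; it is Abelian if $[a,b,c]=[c,b,a]$. A pre-truss is a heap with an associative multiplication; a near-truss satisfies $a[b,c,d]=[ab,ac,ad]$; a skew truss is a near-truss also satisfying $[b,c,d]a=[ba,ca,da]$. An absorber is $z$ with $tz=z=zt$ for all $t$; $T^{\mathrm{Abs}}$ is $T$ minus its (unique) absorber, or $T$ if none. $T$ is a domain if for every $a\in T^{\mathrm{Abs}}$ and $b\neq c$, $ab\neq ac$ and $ba\neq ca$; it is left regular if it is a domain and for all $x,y\in T^{\mathrm{Abs}}$ there exist $r,s\in T^{\mathrm{Abs}}$ with $rx=sy$. $\mathrm{Q}(T)$ is the set of classes $\frac{a}{b}$ of $(b,a)\in T^{\mathrm{Abs}}\times T$ under $(b,a)\sim(b',a')$ iff $\beta b=\beta'b'$, $\beta a=\beta'a'$ for some $\beta,\beta'\in T^{\mathrm{Abs}}$, with heap operation $\left[\frac{a}{b},\frac{a'}{b'},\frac{a''}{b''}\right]=\frac{[\beta_1a,\beta_2a',\beta_3a'']}{\beta_1b}$ for $\beta_i\in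 T^{\mathrm{Abs}}$ with $\beta_1b=\beta_2b'=\beta_3b''$, and multiplication $\frac{a}{b}\cdot\frac{a'}{b'}=\frac{\gamma a'}{\gamma'b}$ for $\gamma,\gamma'\in T^{\mathrm{Abs}}$ with $\gamma b'=\gamma'a$; this is a well-defined pre-truss. *)

Set Implicit Arguments.

Section Trusses.
Variable T : Type.
Variable h : T -> T -> T -> T.
Variable m : T -> T -> T.

Definition is_heap : Prop :=
  (forall a1 a2 a3 a4 a5, h a1 a2 (h a3 a4 a5) = h (h a1 a2 a3) a4 a5) /\
  (forall a b, h a a b = b /\ h b a a = b).

Definition heap_abelian : Prop := forall a b c, h a b c = h c b a.

Definition is_pretruss : Prop :=
  is_heap /\ (forall a b c, m a (m b c) = m (m a b) c).

Definition left_distrib : Prop :=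
  forall a b c d, m a (h b c d) = h (m a b) (m a c) (m a d).

Definition right_distrib : Prop :=
  forall a b c d, m (h b c d) a = h (m b a) (m c a) (m d a).

Definition is_near_truss : Prop := is_pretruss /\ left_distrib.
Definition is_skew_truss : Prop := is_near_truss /\ right_distrib.

Definition is_absorber (z : T) : Prop := forall t, m t z = z /\ m z t = z.
Definition inTAbs (a : T) : Prop := ~ is_absorber a.

Definition is_domain : Prop :=
  forall a b c, inTAbs a -> b <> c -> m a b <> m a c /\ m b a <> m c a.

Definition left_regular : Prop :=
  is_domain /\
  forall x y, inTAbs x -> inTAbs y ->
    exists r s, inTAbs r /\ inTAbs s /\ m r x = m s y.

(* A pair (b, a) represents the fraction a/b; it is admissible iff b ∈ T^Abs. *)
Definition qrel (p p' : T * T) : Prop :=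
  let (b, a) := p in let (b', a') := p' in
  inTAbs b /\ inTAbs b' /\
  exists beta beta', inTAbs beta /\ inTAbs beta' /\
    m beta b = m beta' b' /\ m beta a = m beta' a'.

(* Elements of Q(T) are the equivalence classes, viewed as predicates on pairs. *)
Definition is_qclass (X : T * T -> Prop) : Prop :=
  exists p, inTAbs (fst p) /\ X = qrel p.

(* Heap operation on classes, computed from representatives and any
   admissible choice of the beta_i (well-definedness is part of the theory). *)
Definition Qheap (X Y Z : T * T -> Prop) : T * T -> Prop :=
  fun q => exists b1 a1 b2 a2 b3 a3 be1 be2 be3,
    X (b1, a1) /\ Y (b2, a2) /\ Z (b3, a3) /\
    inTAbs be1 /\ inTAbs be2 /\ inTAbs be3 /\
    m be1 b1 = m be2 b2 /\ m be2 b2 = m be3 b3 /\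
    qrel (m be1 b1, h (m be1 a1) (m be2 a2) (m be3 a3)) q.

(* Multiplication on classes: (a/b)(a'/b') = (γ a')/(γ' b) with γ b' = γ' a,
   γ, γ' ∈ T^Abs.  When a is the absorber, a/b is the absorber class and the
   product is the absorber class. *)
Definition Qmul (X Y : T * T -> Prop) : T * T -> Prop :=
  fun q => exists b a b' a',
    X (b, a) /\ Y (b', a') /\
    ((exists g g', inTAbs g /\ inTAbs g' /\ m g b' = m g' a /\
                   qrel (m g' b, m g a') q)
     \/ (is_absorber a /\ qrel (b, a) q)).

Definition Q_heap_abelian : Prop :=
  forall X Y Z, is_qclass X -> is_qclass Y -> is_qclass Z ->
    Qheap X Y Z = Qheap Z Y X.

Definition Q_left_distrib : Prop :=
  forall A X Y Z, is_qclass A -> is_qclass X -> is_qclass Y -> is_qclass Z ->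
    Qmul A (Qheap X Y Z) = Qheap (Qmul A X) (Qmul A Y) (Qmul A Z).

Definition Q_right_distrib : Prop :=
  forall A X Y Z, is_qclass A -> is_qclass X -> is_qclass Y -> is_qclass Z ->
    Qmul (Qheap X Y Z) A = Qheap (Qmul X A) (Qmul Y A) (Qmul Z A).

Definition Q_is_heap : Prop :=
  (forall X1 X2 X3 X4 X5, is_qclass X1 -> is_qclass X2 -> is_qclass X3 ->
     is_qclass X4 -> is_qclass X5 ->
     Qheap X1 X2 (Qheap X3 X4 X5) = Qheap (Qheap X1 X2 X3) X4 X5) /\
  (forall X Y, is_qclass X -> is_qclass Y -> Qheap X X Y = Y /\ Qheap Y X X = Y).

Definition Q_is_pretruss : Prop :=
  Q_is_heap /\
  (forall X Y Z, is_qclass X -> is_qclass Y -> is_qclass Z ->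
     Qmul X (Qmul Y Z) = Qmul (Qmul X Y) Z).

Definition Q_is_near_truss : Prop := Q_is_pretruss /\ Q_left_distrib.
Definition Q_is_skew_truss : Prop := Q_is_near_truss /\ Q_right_distrib.

End Trusses.

(* Cancellation in a domain and the left Ore condition make the relation on
   fractions transitive, let finitely many fractions be brought to a common
   denominator, and make the product (a/b)(a'/b') = (g a')/(g' b), where
   g b' = g' a, independent of the representatives and of the Ore witnesses.
   Over a common denominator d, left distributivity gives
   [x1/d, x2/d, x3/d] = [x1,x2,x3]/d, so the heap identities and left
   distributivity pass from T to Q(T).  For right distributivity a single e
   with g_i b = e x_i serves all three numerators, and right distributivity of
   T makes [g1,g2,g3] a witness for [x1,x2,x3].  The Abelian case is formal:
   the heap of Q(T) is defined symmetrically. *)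

From Stdlib Require Import Classical FunctionalExtensionality PropExtensionality List.
Set Implicit Arguments.

Lemma Q_heap_abelian_of_abelian (T : Type) (h : T -> T -> T -> T) (m : T -> T -> T) :
  heap_abelian h -> Q_heap_abelian h m.
Proof.
  intros Hab X Y Z _ _ _. extensionality q. apply propositional_extensionality.
  split; intros (b1 & a1 & b2 & a2 & b3 & a3 & e1 & e2 & e3 &
                 X1 & Y2 & Z3 & He1 & He2 & He3 & E12 & E23 & Hq);
    exists b3, a3, b2, a2, b1, a1, e3, e2, e1;
    do 6 (split; [assumption|]); do 2 (split; [symmetry; assumption|]);
    rewrite <- E23, <- E12, Hab; exact Hq.
Qed.

Section LeftFractions.

Variable T : Type.
Variable h : T -> T -> T -> T.
Variable m : T -> T -> T.

Hypothesis mul_assoc : forall a b c, m a (m b c) = m (m a b) c.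
Hypothesis domain : is_domain m.
Hypothesis ore : forall x y, inTAbs m x -> inTAbs m y ->
  exists r s, inTAbs m r /\ inTAbs m s /\ m r x = m s y.

Local Notation TA := (inTAbs m).

Lemma mul_cancel_l a b c : TA a -> m a b = m a c -> b = c.
Proof.
  intros Ha E. destruct (classic (b = c)) as [|Hbc]; [assumption|].
  destruct (domain Ha Hbc); contradiction.
Qed.

Lemma mul_cancel_r a b c : TA a -> m b a = m c a -> b = c.
Proof.
  intros Ha E. destruct (classic (b = c)) as [|Hbc]; [assumption|].
  destruct (domain Ha Hbc); contradiction.
Qed.

Lemma not_inTAbs_absorber a : ~ TA a -> is_absorber m a.
Proof. intro Ha. apply NNPP, Ha. Qed.

Lemma absorber_mul_l z t : is_absorber m z -> m z t = z.
Proof. intro Hz. apply (proj2 (Hz t)). Qed.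

Lemma absorber_mul_r z t : is_absorber m z -> m t z = z.
Proof. intro Hz. apply (proj1 (Hz t)). Qed.

(* If a b were the absorber, cancelling a and then b would identify any two
   elements of T, making b itself an absorber. *)
Lemma inTAbs_mul a b : TA a -> TA b -> TA (m a b).
Proof.
  intros Ha Hb Hab. apply Hb.
  assert (trivial : forall t t' : T, t = t').
  { intros t t'. apply (mul_cancel_l Hb), (mul_cancel_l Ha).
    rewrite !mul_assoc, (absorber_mul_l t Hab), (absorber_mul_l t' Hab). reflexivity. }
  intro t. split; apply trivial.
Qed.

Lemma absorber_of_mul_r x e z : is_absorber m z -> TA e -> m x e = z -> x = z.
Proof.
  intros Hz He E. apply (mul_cancel_r He). rewrite E, absorber_mul_l; auto.
Qed.

Lemma qrel_inTAbs b a b' a' : qrel m (b, a) (b', a') -> TA b /\ TA b'.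
Proof. simpl. tauto. Qed.

Lemma qrel_refl b a : TA b -> qrel m (b, a) (b, a).
Proof. intro Hb. repeat split; auto. exists b, b. auto. Qed.

Lemma qrel_sym b a b' a' : qrel m (b, a) (b', a') -> qrel m (b', a') (b, a).
Proof.
  intros (Hb & Hb' & be & be' & He & He' & Eb & Ea).
  repeat split; auto. exists be', be. auto.
Qed.

Lemma qrel_trans b a b' a' b'' a'' :
  qrel m (b, a) (b', a') -> qrel m (b', a') (b'', a'') -> qrel m (b, a) (b'', a'').
Proof.
  intros (Hb & _ & be & be' & He & He' & Eb & Ea)
         (_ & Hb'' & ga & ga' & Hg & Hg' & Eb' & Ea').
  destruct (ore He' Hg) as (r & s & Hr & Hs & E).
  repeat split; auto. exists (m r be), (m s ga').
  repeat split; try apply inTAbs_mul; auto.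
  - rewrite <- !mul_assoc, Eb, !mul_assoc, E, <- !mul_assoc, Eb'. reflexivity.
  - rewrite <- !mul_assoc, Ea, !mul_assoc, E, <- !mul_assoc, Ea'. reflexivity.
Qed.

Lemma qrel_mul_l c b a : TA c -> TA b -> qrel m (m c b, m c a) (b, a).
Proof.
  intros Hc Hb. repeat split; auto using inTAbs_mul.
  exists c, (m c c). repeat split; auto using inTAbs_mul.
Qed.

Lemma qrel_same_den d x x' : qrel m (d, x) (d, x') -> x = x'.
Proof.
  intros (Hd & _ & be & be' & He & _ & Eb & Ea).
  apply (mul_cancel_r Hd) in Eb. subst be'. exact (mul_cancel_l He Ea).
Qed.

Lemma qrel_absorber b b' z : is_absorber m z -> TA b -> TA b' -> qrel m (b, z) (b', z).
Proof.
  intros Hz Hb Hb'. destruct (ore Hb Hb') as (r & s & Hr & Hs & E).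
  repeat split; auto. exists r, s.
  rewrite (absorber_mul_r r Hz), (absorber_mul_r s Hz). auto.
Qed.

Lemma qrel_absorber_num b b' z a : is_absorber m z -> qrel m (b, z) (b', a) -> a = z.
Proof.
  intros Hz (_ & _ & be & be' & _ & He' & _ & Ea).
  rewrite absorber_mul_r in Ea by assumption.
  apply (mul_cancel_l He'). rewrite <- Ea, absorber_mul_r; auto.
Qed.

Lemma qclass_eq b a b' a' : qrel m (b, a) (b', a') -> qrel m (b, a) = qrel m (b', a').
Proof.
  intro H. extensionality q. destruct q as [c e]. apply propositional_extensionality.
  split; eauto using qrel_trans, qrel_sym.
Qed.

Lemma common_denominator (X : T * T -> Prop) (l : list (T * T -> Prop)) :
  is_qclass m X -> Forall (is_qclass m) l ->
  exists d, TA d /\ Forall (fun Y => exists y, Y = qrel m (d, y)) (X :: l).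
Proof.
  revert X. induction l as [|Y l IH]; intros X ([b a] & Hb & ->) Hl.
  - exists b. split; [assumption|]. constructor; [exists a; reflexivity | constructor].
  - inversion Hl as [|? ? HY Hl']; subst.
    destruct (IH Y HY Hl') as (d & Hd & Hden).
    destruct (ore Hd Hb) as (r & s & Hr & Hs & E).
    exists (m r d). split; [apply inTAbs_mul; assumption|]. constructor.
    + exists (m s a). rewrite E. apply qclass_eq, qrel_sym, qrel_mul_l; assumption.
    + eapply Forall_impl; [|exact Hden]. intros Z (z & ->).
      exists (m r z). apply qclass_eq, qrel_sym, qrel_mul_l; assumption.
Qed.

Lemma qrel_den_change D d : TA D -> TA d ->
  exists r s, TA r /\ TA s /\ m r D = m s d /\
    forall u x, qrel m (D, u) (d, x) -> m r u = m s x.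
Proof.
  intros HD Hd. destruct (ore HD Hd) as (r & s & Hr & Hs & E).
  exists r, s. do 3 (split; [assumption|]). intros u x Hux.
  apply (@qrel_same_den (m r D)).
  eapply qrel_trans; [apply qrel_mul_l; assumption|].
  eapply qrel_trans; [exact Hux|].
  rewrite E. apply qrel_sym, qrel_mul_l; assumption.
Qed.

Lemma qrel_repr_mul_l d x b a e : qrel m (d, x) (b, a) -> TA e ->
  qrel m (m e b, m e a) (d, x).
Proof.
  intros Hq He. eapply qrel_trans; [|apply qrel_sym, Hq].
  apply qrel_mul_l; [assumption | apply (qrel_inTAbs Hq)].
Qed.

Definition mul_witness (a b' g g' : T) : Prop := TA g' /\ m g b' = m g' a.

Lemma mul_witness_exists a b' : TA b' -> exists g g', mul_witness a b' g g'.
Proof.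
  intro Hb'. destruct (classic (TA a)) as [Ha|Ha].
  - destruct (ore Hb' Ha) as (r & s & Hr & Hs & E). exists r, s. split; assumption.
  - apply not_inTAbs_absorber in Ha. exists a, b'. split; [assumption|].
    rewrite absorber_mul_l, absorber_mul_r; auto.
Qed.

Lemma mul_witness_indep b a b' a' g g' e e' :
  TA b -> TA b' -> mul_witness a b' g g' -> mul_witness a b' e e' ->
  qrel m (m g' b, m g a') (m e' b, m e a').
Proof.
  intros Hb Hb' [Hg' Eg] [He' Ee].
  destruct (ore Hg' He') as (r & s & Hr & Hs & E).
  assert (Erg : m r g = m s e).
  { apply (mul_cancel_r Hb'). rewrite <- !mul_assoc, Eg, Ee, !mul_assoc, E. reflexivity. }
  repeat split; auto using inTAbs_mul. exists r, s.
  rewrite !mul_assoc, E, Erg. auto.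
Qed.

Lemma mul_witness_repr_l b1 a1 b a b' a' g g' :
  qrel m (b1, a1) (b, a) -> mul_witness a b' g g' -> TA b' ->
  exists k k', mul_witness a1 b' k k' /\ qrel m (m k' b1, m k a') (m g' b, m g a').
Proof.
  intros Hq [Hg' Eg] Hb'.
  destruct Hq as (Hb1 & Hb & be & be' & He & He' & Eb & Ea).
  destruct (ore Hg' He') as (r & s & Hr & Hs & E).
  exists (m r g), (m s be). split; [split|].
  - auto using inTAbs_mul.
  - rewrite <- !mul_assoc, Eg, !mul_assoc, E, <- !mul_assoc, Ea. reflexivity.
  - replace (m (m s be) b1) with (m r (m g' b)).
    + rewrite <- mul_assoc. apply qrel_mul_l; auto using inTAbs_mul.
    + rewrite <- mul_assoc, Eb, !mul_assoc, E. reflexivity.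
Qed.

Lemma mul_witness_repr_r b a b2 a2 b' a' g g' :
  qrel m (b2, a2) (b', a') -> mul_witness a b' g g' -> TA b ->
  exists k k', mul_witness a b2 k k' /\ qrel m (m k' b, m k a2) (m g' b, m g a').
Proof.
  intros Hq [Hg' Eg] Hb.
  destruct Hq as (Hb2 & Hb' & de & de' & Hd & Hd' & Eb & Ea).
  destruct (classic (TA g)) as [Hg|Hg].
  - destruct (ore Hg Hd') as (r & s & Hr & Hs & E).
    exists (m s de), (m r g'). split; [split|].
    + auto using inTAbs_mul.
    + rewrite <- !mul_assoc, Eb, !mul_assoc, <- E, <- !mul_assoc, Eg. reflexivity.
    + replace (m (m s de) a2) with (m r (m g a')).
      * rewrite <- mul_assoc. apply qrel_mul_l; auto using inTAbs_mul.
      * rewrite <- mul_assoc, Ea, !mul_assoc, E. reflexivity.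
  - apply not_inTAbs_absorber in Hg. exists g, g'. split; [split|].
    + assumption.
    + rewrite <- Eg, !absorber_mul_l; auto.
    + rewrite !(absorber_mul_l _ Hg). apply qrel_refl, inTAbs_mul; assumption.
Qed.

Lemma mul_witness_inTAbs a b' g g' : TA a -> mul_witness a b' g g' -> TA g.
Proof.
  intros Ha [Hg' Eg] Hg. apply (inTAbs_mul Hg' Ha).
  rewrite <- Eg, (absorber_mul_l b' Hg). exact Hg.
Qed.

Lemma mul_witness_absorber a b' g g' :
  is_absorber m a -> TA b' -> mul_witness a b' g g' -> g = a.
Proof.
  intros Ha Hb' [_ Eg]. rewrite (absorber_mul_r g' Ha) in Eg.
  exact (absorber_of_mul_r Ha Hb' Eg).
Qed.

Lemma Qmul_qrel b a b' a' g g' : TA b -> TA b' -> mul_witness a b' g g' ->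
  Qmul m (qrel m (b, a)) (qrel m (b', a')) = qrel m (m g' b, m g a').
Proof.
  intros Hb Hb' Hw. extensionality q. destruct q as [qb qa].
  apply propositional_extensionality. split.
  - intros (b1 & a1 & b2 & a2 & X1 & Y2 & [(k & k' & _ & Hk' & Ek & Hq) | (Ha1 & Hq)]);
      eapply qrel_trans; try exact Hq; apply qrel_sym.
    + destruct (mul_witness_repr_r (qrel_sym Y2) Hw Hb) as (k1 & k1' & Hw1 & Q1).
      destruct (mul_witness_repr_l a2 (qrel_sym X1) Hw1 (proj2 (qrel_inTAbs Y2)))
        as (k2 & k2' & Hw2 & Q2).
      eapply qrel_trans; [|exact Q1]. eapply qrel_trans; [|exact Q2].
      exact (mul_witness_indep a2 (proj2 (qrel_inTAbs X1)) (proj2 (qrel_inTAbs Y2))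
               (conj Hk' Ek) Hw2).
    + destruct (qrel_inTAbs X1) as [_ Hb1].
      rewrite (qrel_absorber_num Ha1 (qrel_sym X1)) in Hw.
      rewrite (mul_witness_absorber Ha1 Hb' Hw), (absorber_mul_l a' Ha1).
      apply qrel_absorber; try assumption. apply inTAbs_mul; [apply Hw | assumption].
  - intro Hq. exists b, a, b', a'. split; [apply qrel_refl; assumption|].
    split; [apply qrel_refl; assumption|].
    destruct (classic (TA a)) as [Ha|Ha].
    + left. exists g, g'. split; [exact (mul_witness_inTAbs Ha Hw)|].
      destruct Hw as [Hg' Eg]. exact (conj Hg' (conj Eg Hq)).
    + right. apply not_inTAbs_absorber in Ha. split; [assumption|].
      rewrite (mul_witness_absorber Ha Hb' Hw), (absorber_mul_l a' Ha) in Hq.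
      eapply qrel_trans; [|exact Hq].
      apply qrel_absorber; try assumption. apply inTAbs_mul; [apply Hw | assumption].
Qed.

Lemma Qmul_absorber_l b a b' a' : is_absorber m a -> TA b -> TA b' ->
  Qmul m (qrel m (b, a)) (qrel m (b', a')) = qrel m (b, a).
Proof.
  intros Ha Hb Hb'.
  assert (Hw : mul_witness a b' a b').
  { split; [assumption|]. rewrite absorber_mul_l, absorber_mul_r; auto. }
  rewrite (Qmul_qrel a' Hb Hb' Hw), (absorber_mul_l a' Ha).
  apply qclass_eq, qrel_absorber; auto using inTAbs_mul.
Qed.

Lemma Qmul_qclass b a b' a' : TA b -> TA b' ->
  exists c e, TA c /\ Qmul m (qrel m (b, a)) (qrel m (b', a')) = qrel m (c, e).
Proof.
  intros Hb Hb'. destruct (mul_witness_exists a Hb') as (g & g' & Hw).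
  exists (m g' b), (m g a'). split.
  - apply inTAbs_mul; [apply Hw | assumption].
  - apply Qmul_qrel; assumption.
Qed.

(* With g b' = g' a and k b'' = k' (g a'), the pair (k, k' g) is a witness for
   a'/b' times a''/b''; as T has no unit, (b, b k' g') then serves as a witness
   for a/b times the result. *)
Lemma Qmul_assoc X Y Z : is_qclass m X -> is_qclass m Y -> is_qclass m Z ->
  Qmul m X (Qmul m Y Z) = Qmul m (Qmul m X Y) Z.
Proof.
  intros ([b a] & Hb & ->) ([b' a'] & Hb' & ->) ([b'' a''] & Hb'' & ->). simpl in *.
  destruct (classic (TA a)) as [Ha|Ha].
  - destruct (mul_witness_exists a Hb') as (g & g' & Hw1).
    pose proof Hw1 as [Hg' Eg].
    assert (Hgb : TA (m g' b)) by (apply inTAbs_mul; assumption).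
    destruct (mul_witness_exists (m g a') Hb'') as (k & k' & Hw2).
    pose proof Hw2 as [Hk' Ek].
    assert (Hw3 : mul_witness a' b'' k (m k' g)).
    { split; [|rewrite Ek, mul_assoc; reflexivity].
      apply inTAbs_mul; [assumption | exact (mul_witness_inTAbs Ha Hw1)]. }
    assert (Hkb : TA (m (m k' g) b')) by (apply inTAbs_mul; [apply Hw3 | assumption]).
    assert (Hw4 : mul_witness a (m (m k' g) b') b (m b (m k' g'))).
    { split; [repeat apply inTAbs_mul; assumption|].
      rewrite <- !mul_assoc, Eg. reflexivity. }
    rewrite (Qmul_qrel a' Hb Hb' Hw1), (Qmul_qrel a'' Hgb Hb'' Hw2),
      (Qmul_qrel a'' Hb' Hb'' Hw3), (Qmul_qrel _ Hb Hkb Hw4).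
    apply qclass_eq.
    replace (m (m b (m k' g')) b) with (m b (m k' (m g' b)))
      by (rewrite !mul_assoc; reflexivity).
    apply qrel_mul_l; auto using inTAbs_mul.
  - apply not_inTAbs_absorber in Ha.
    destruct (Qmul_qclass a' a'' Hb' Hb'') as (c & e & Hc & ->).
    rewrite (Qmul_absorber_l e Ha Hb Hc), (Qmul_absorber_l a' Ha Hb Hb'),
      (Qmul_absorber_l a'' Ha Hb Hb'').
    reflexivity.
Qed.

Section LeftDistributive.

Hypothesis left_distr : left_distrib h m.

Lemma Qheap_common_den d x1 x2 x3 : TA d ->
  Qheap h m (qrel m (d, x1)) (qrel m (d, x2)) (qrel m (d, x3)) = qrel m (d, h x1 x2 x3).
Proof.
  intro Hd. extensionality q. destruct q as [qb qa].
  apply propositional_extensionality. split.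
  - intros (b1 & a1 & b2 & a2 & b3 & a3 & e1 & e2 & e3 &
            X1 & X2 & X3 & He1 & He2 & He3 & E12 & E23 & Hq).
    eapply qrel_trans; [|exact Hq]. apply qrel_sym.
    assert (HD : TA (m e1 b1)) by (apply inTAbs_mul; [|apply (qrel_inTAbs X1)]; assumption).
    destruct (qrel_den_change HD Hd) as (r & s & Hr & Hs & E & Hnum).
    pose proof (qrel_repr_mul_l X1 He1) as Q1.
    pose proof (qrel_repr_mul_l X2 He2) as Q2. rewrite <- E12 in Q2.
    pose proof (qrel_repr_mul_l X3 He3) as Q3. rewrite <- E23, <- E12 in Q3.
    eapply qrel_trans; [apply qrel_sym, (qrel_mul_l _ Hr HD)|].
    rewrite left_distr, (Hnum _ _ Q1), (Hnum _ _ Q2), (Hnum _ _ Q3), <- left_distr, E.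
    apply qrel_mul_l; assumption.
  - intro Hq. exists d, x1, d, x2, d, x3, d, d, d.
    do 3 (split; [apply qrel_refl; assumption|]).
    do 3 (split; [assumption|]). do 2 (split; [reflexivity|]).
    rewrite <- left_distr. eapply qrel_trans; [apply qrel_mul_l; assumption | exact Hq].
Qed.

Lemma Q_is_heap_of_heap : is_heap h -> Q_is_heap h m.
Proof.
  intros [heap_assoc heap_id]. split.
  - intros X1 X2 X3 X4 X5 H1 H2 H3 H4 H5.
    destruct (common_denominator (l := X2 :: X3 :: X4 :: X5 :: nil) H1
                ltac:(repeat constructor; assumption)) as (d & Hd & Hden).
    rewrite !Forall_cons_iff in Hden.
    destruct Hden as ((x1 & ->) & (x2 & ->) & (x3 & ->) & (x4 & ->) & (x5 & ->) & _).
    rewrite !Qheap_common_den, heap_assoc by assumption. reflexivity.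
  - intros X Y HX HY.
    destruct (common_denominator (l := Y :: nil) HX ltac:(repeat constructor; assumption))
      as (d & Hd & Hden).
    rewrite !Forall_cons_iff in Hden. destruct Hden as ((x & ->) & (y & ->) & _).
    rewrite !Qheap_common_den by assumption.
    split; f_equal; f_equal; apply heap_id.
Qed.

Lemma Q_left_distrib_of_left_distrib : Q_left_distrib h m.
Proof.
  intros A X Y Z ([b a] & Hb & ->) HX HY HZ. simpl in Hb.
  destruct (common_denominator (l := Y :: Z :: nil) HX
              ltac:(repeat constructor; assumption)) as (d & Hd & Hden).
  rewrite !Forall_cons_iff in Hden.
  destruct Hden as ((x1 & ->) & (x2 & ->) & (x3 & ->) & _).
  destruct (mul_witness_exists a Hd) as (g & g' & Hw).
  assert (Hgb : TA (m g' b)) by (apply inTAbs_mul; [apply Hw | assumption]).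
  rewrite Qheap_common_den, !(Qmul_qrel _ Hb Hd Hw), Qheap_common_den, left_distr
    by assumption.
  reflexivity.
Qed.

End LeftDistributive.

Lemma mul_witness_common b x1 x2 x3 : TA b ->
  exists g1 g2 g3 e,
    mul_witness x1 b g1 e /\ mul_witness x2 b g2 e /\ mul_witness x3 b g3 e.
Proof.
  intro Hb.
  destruct (mul_witness_exists x1 Hb) as (g1 & g1' & [Hg1' E1]).
  destruct (mul_witness_exists x2 Hb) as (g2 & g2' & [Hg2' E2]).
  destruct (mul_witness_exists x3 Hb) as (g3 & g3' & [Hg3' E3]).
  destruct (ore Hg1' Hg2') as (r1 & r2 & Hr1 & Hr2 & E12).
  assert (Hrg : TA (m r1 g1')) by (apply inTAbs_mul; assumption).
  destruct (ore Hrg Hg3') as (s & s3 & Hs & Hs3 & E123).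
  exists (m (m s r1) g1), (m (m s r2) g2), (m s3 g3), (m s (m r1 g1')).
  split; [|split]; (split; [apply inTAbs_mul; assumption|]).
  - rewrite <- !mul_assoc, E1. reflexivity.
  - rewrite E12, <- !mul_assoc, E2. reflexivity.
  - rewrite E123, <- !mul_assoc, E3. reflexivity.
Qed.

Lemma mul_witness_heap x1 x2 x3 b g1 g2 g3 e :
  left_distrib h m -> right_distrib h m ->
  mul_witness x1 b g1 e -> mul_witness x2 b g2 e -> mul_witness x3 b g3 e ->
  mul_witness (h x1 x2 x3) b (h g1 g2 g3) e.
Proof.
  intros left_distr right_distr [He E1] [_ E2] [_ E3].
  split; [assumption|]. rewrite right_distr, left_distr, E1, E2, E3. reflexivity.
Qed.

Lemma Q_right_distrib_of_distrib :
  left_distrib h m -> right_distrib h m -> Q_right_distrib h m.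
Proof.
  intros left_distr right_distr A X Y Z ([b a] & Hb & ->) HX HY HZ. simpl in Hb.
  destruct (common_denominator (l := Y :: Z :: nil) HX
              ltac:(repeat constructor; assumption)) as (d & Hd & Hden).
  rewrite !Forall_cons_iff in Hden.
  destruct Hden as ((x1 & ->) & (x2 & ->) & (x3 & ->) & _).
  destruct (mul_witness_common x1 x2 x3 Hb) as (g1 & g2 & g3 & e & Hw1 & Hw2 & Hw3).
  pose proof (mul_witness_heap left_distr right_distr Hw1 Hw2 Hw3) as Hw.
  assert (Hed : TA (m e d)) by (apply inTAbs_mul; [apply Hw1 | assumption]).
  rewrite Qheap_common_den, (Qmul_qrel _ Hd Hb Hw), (Qmul_qrel _ Hd Hb Hw1),
    (Qmul_qrel _ Hd Hb Hw2), (Qmul_qrel _ Hd Hb Hw3),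
    Qheap_common_den, right_distr by assumption.
  reflexivity.
Qed.

End LeftFractions.

Theorem proposition5p3 (T : Type) (h : T -> T -> T -> T) (m : T -> T -> T)
  (HT : is_pretruss h m) (HLR : left_regular m) :
  (heap_abelian h -> Q_heap_abelian h m) /\
  (is_near_truss h m -> Q_is_near_truss h m) /\
  (is_skew_truss h m -> Q_is_skew_truss h m).
Proof.
  destruct HT as [Hheap mul_assoc], HLR as [domain ore].
  assert (near : is_near_truss h m -> Q_is_near_truss h m).
  { intros [_ left_distr].
    split; [split|].
    - apply Q_is_heap_of_heap; assumption.
    - intros; apply Qmul_assoc; assumption.
    - apply Q_left_distrib_of_left_distrib; assumption. }
  split; [apply Q_heap_abelian_of_abelian | split; [exact near|]].
  intros [Hnear right_distr]. split; [exact (near Hnear)|].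
  destruct Hnear as [_ left_distr]. apply Q_right_distrib_of_distrib; assumption.
Qed.
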